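(* Let $b\ge 2$ and let $N$ be a $b$-wMRH number with $k$ base-$b$ digits and with multiplicative extra term $A\ge 1$. Then $k\le A+4$ if $b\ge 6$, and $k\le A+5$ if $2\le b\le 5$.
   Context: Fix a base $b\ge 2$. $s_b(N)$ is the sum of the base-$b$ digits of $N$. For a positive integer $X$, its reversal $X^R$ is the integer whose base-$b$ representation is that of $X$ written in reverse order (leading zeros of the result are dropped). A positive integer $N$ is a $b$-wMRH number if there exists an integer $A\ge 0$, called a multiplicative extra term of $N$, such that $N=(A+s_b(N))\cdot(A+s_b(N))^R$. *)

From mathcomp Require Import all_boot.
Set Implicit Arguments. Unset Strict Implicit. Unset Printing Implicit Defensive.

(* Base-b digits of n, least significant first; empty list for n = 0.
   Fuel-based recursion; fuel n is always sufficient when b >= 2. *)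
Fixpoint digits_aux (b fuel n : nat) : seq nat :=
  match fuel with
  | 0 => [::]
  | fuel'.+1 => if n == 0 then [::] else (n %% b) :: digits_aux b fuel' (n %/ b)
  end.

Definition digits (b n : nat) : seq nat := digits_aux b n n.

Definition from_digits (b : nat) (s : seq nat) : nat :=
  foldr (fun d acc => d + b * acc) 0 s.

Definition ndigits (b n : nat) : nat := size (digits b n).

Definition digsum (b n : nat) : nat := sumn (digits b n).

(* Reversal: the base-b representation written in reverse order
   (leading zeros of the result are dropped automatically by evaluation). *)
Definition rev_b (b n : nat) : nat := from_digits b (rev (digits b n)).

Definition mult_extra_term (b N A : nat) : Prop :=
  N = (A + digsum b N) * rev_b b (A + digsum b N).

Definition wMRH (b N : nat) : Prop := 0 < N /\ exists A, mult_extra_term b N A.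

From mathcomp Require Import all_boot zify.

Set Implicit Arguments.
Unset Strict Implicit.

(* Let k be the number of digits of N and M := A + s_b(N) <= A + (b - 1) k.
   Since M^R has no more digits than M, b^(k-1) <= N = M * M^R < b M^2.
   If k exceeded the claimed bound, then M <= b t with t = k, k - 1, k - 2, k - 3
   for b >= 6, b = 4 or 5, b = 3, b = 2 respectively, whence b^(k-4) < t^2, which
   the exponential growth of b^(k-4) rules out; in base 2 this leaves only
   k = 7, 8, 9, where M <= 12 and the finitely many products M * M^R are checked
   directly. *)

Lemma sumn_le_mul b s : all (fun d => d < b) s -> sumn s <= (b - 1) * size s.
Proof. by elim: s => //= x s IH /andP[hx /IH]; nia. Qed.

Lemma from_digits_lt b s : all (fun d => d < b) s -> from_digits b s < b ^ size s.
Proof. by elim: s => //= x s IH /andP[hx /IH]; rewrite expnS; nia. Qed.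

Lemma sq_le_expn b x e j : 2 <= b -> 3 <= x -> x ^ 2 <= b ^ e -> (x + j) ^ 2 <= b ^ (e + j).
Proof.
move=> b2 x3 hx; elim: j => [|j IH]; first by rewrite !addn0.
rewrite !addnS [in X in _ <= X]expnS -mulnn; move: IH; rewrite -mulnn.
by set X := b ^ (e + j); nia.
Qed.

Lemma sq_le_expn_ge b0 b t x e : 2 <= b0 <= b -> 3 <= x <= t -> x ^ 2 <= b0 ^ e ->
  t ^ 2 <= b ^ (t + e - x).
Proof.
move=> /andP[b02 b0b] /andP[x3 xt] hx.
have -> : t = x + (t - x) by lia.
rewrite (_ : x + (t - x) + e - x = e + (t - x)); last by lia.
have e0 : 0 < e by move: hx; case: e => //; rewrite expn0; nia.
by apply: leq_trans (@sq_le_expn b0 x e (t - x) b02 x3 hx) _; rewrite leq_exp2r ?addn_gt0 ?e0.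
Qed.

Section Digits.

Variable b : nat.
Hypothesis b_gt1 : 1 < b.

Lemma digits_aux0 f : digits_aux b f 0 = [::].
Proof. by case: f. Qed.

Lemma digits_aux_lt_base f n : all (fun d => d < b) (digits_aux b f n).
Proof.
elim: f n => [|f IH] n //=; case: (n == 0) => //=.
by rewrite ltn_pmod ?IH //; lia.
Qed.

Lemma digits_aux_bounds f n : n <= f -> 0 < n ->
  b ^ (size (digits_aux b f n)).-1 <= n < b ^ size (digits_aux b f n).
Proof.
elim: f n => [|f IH] n /=; first by lia.
move=> nf n0; rewrite gtn_eqF //=.
have hd := divn_eq n b; have hr := ltn_pmod n (ltnW b_gt1).
have [q0|q0] := posnP (n %/ b); first by rewrite q0 digits_aux0 expn0 /=; lia.
have /andP[lo hi] : b ^ (size (digits_aux b f (n %/ b))).-1 <= n %/ b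
                    < b ^ size (digits_aux b f (n %/ b)).
  by apply: IH => //; have := ltn_Pdiv b_gt1 n0; lia.
move: lo hi; case: (size _) => [|s] /=; rewrite ?expnS /=; nia.
Qed.

Lemma ndigits_bounds n : 0 < n -> b ^ (ndigits b n).-1 <= n < b ^ ndigits b n.
Proof. exact: digits_aux_bounds. Qed.

Lemma digsum_le n : digsum b n <= (b - 1) * ndigits b n.
Proof. exact/sumn_le_mul/digits_aux_lt_base. Qed.

Lemma rev_b_lt n : rev_b b n < b ^ ndigits b n.
Proof.
rewrite /rev_b /ndigits -(size_rev (digits b n)).
by apply: from_digits_lt; rewrite all_rev digits_aux_lt_base.
Qed.

Lemma expn_ndigits_le n : 0 < n -> b ^ ndigits b n <= b * n.
Proof.
move/ndigits_bounds; case: (ndigits b n) => [|k]; first by rewrite expn0; lia.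
by rewrite expnS /= => /andP[lo _]; rewrite leq_mul2l lo orbT.
Qed.

Lemma mul_rev_b_lt n : 0 < n -> n * rev_b b n < b * n ^ 2.
Proof.
move=> n0; have := leq_trans (rev_b_lt n) (@expn_ndigits_le n n0).
by rewrite expnS expn1; nia.
Qed.

End Digits.

Lemma mult_extra_term_expn_lt b N A : 1 < b -> 0 < N -> mult_extra_term b N A ->
  b ^ (ndigits b N).-1 < b * (A + digsum b N) ^ 2.
Proof.
move=> b1 N0 hN; have /andP[lo _] := ndigits_bounds b1 N0.
have M0 : 0 < A + digsum b N by move: N0; rewrite {1}hN muln_gt0 => /andP[].
by apply: leq_ltn_trans lo _; rewrite {1}hN mul_rev_b_lt.
Qed.

Lemma mult_extra_term_expn_lt_sq b N A t : 1 < b -> 0 < N -> mult_extra_term b N A ->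
  4 <= ndigits b N -> A + (b - 1) * ndigits b N <= b * t ->
  b ^ (ndigits b N - 4) < t ^ 2.
Proof.
move=> b1 N0 hN k4 hMt.
have hM : A + digsum b N <= b * t by have := digsum_le b1 N; lia.
have := mult_extra_term_expn_lt b1 N0 hN.
rewrite (_ : (ndigits b N).-1 = 3 + (ndigits b N - 4)) ?expnD; last by lia.
move/leq_trans=> /(_ (b ^ 3 * t ^ 2)) h.
rewrite -(ltn_pmul2l (_ : 0 < b ^ 3)) ?expn_gt0 ?(ltnW b1) // h //.
by have := leq_mul hM hM; rewrite -!mulnn !expnS expn0; nia.
Qed.

Lemma binary_mul_rev_b_small :
  all (fun k => all (fun M => M * rev_b 2 M < 2 ^ k.-1) (iota 0 (2 * k - 5))) (iota 7 3).
Proof. by vm_compute. Qed.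

Lemma ndigits_le_large_base b N A : 6 <= b -> 0 < N -> 1 <= A ->
  mult_extra_term b N A -> ndigits b N <= A + 4.
Proof.
move=> b6 N0 A1 hN; rewrite leqNgt; apply/negP => hk.
have := @mult_extra_term_expn_lt_sq b N A (ndigits b N) ltac:(lia) N0 hN ltac:(lia) ltac:(nia).
rewrite ltnNge (_ : ndigits b N - 4 = ndigits b N + 2 - 6); last by lia.
by rewrite (@sq_le_expn_ge 6) //; lia.
Qed.

Lemma ndigits_le_small_base b N A : 2 <= b <= 5 -> 0 < N -> 1 <= A ->
  mult_extra_term b N A -> ndigits b N <= A + 5.
Proof.
move=> /andP[b2 b5] N0 A1 hN; rewrite leqNgt; apply/negP => hk.
set k := ndigits b N in hk.
have hsq t : A + (b - 1) * k <= b * t -> b ^ (k - 4) < t ^ 2.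
  by apply: mult_extra_term_expn_lt_sq => //; lia.
have [b4|b3] := ltnP 3 b.
  have := hsq (k - 1) ltac:(nia); rewrite ltnNge (_ : k - 4 = k - 1 + 3 - 6); last by lia.
  by rewrite (@sq_le_expn_ge 4) //; lia.
have [b3'|b2'] := ltnP 2 b.
  have := hsq (k - 2) ltac:(nia); rewrite ltnNge (_ : k - 4 = k - 2 + 3 - 5); last by lia.
  by rewrite (@sq_le_expn_ge 3) //; lia.
have b_eq2 : b = 2 by lia.
subst b.
have [k10|k9] := leqP 10 k.
  have := hsq (k - 3) ltac:(nia); rewrite ltnNge (_ : k - 4 = k - 3 + 6 - 7); last by lia.
  by rewrite (@sq_le_expn_ge 2) //; lia.
have /andP[lo _] := ndigits_bounds (isT : 1 < 2) N0.
have k_small : k \in iota 7 3 by rewrite mem_iota; lia.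
have M_small : A + digsum 2 N \in iota 0 (2 * k - 5).
  by rewrite mem_iota; have := digsum_le (isT : 1 < 2) N; lia.
have := allP (allP binary_mul_rev_b_small k k_small) _ M_small.
by rewrite -hN ltnNge lo.
Qed.

Theorem mainTheorem19 (b N A : nat) :
  2 <= b -> 0 < N -> 1 <= A -> mult_extra_term b N A ->
  (6 <= b -> ndigits b N <= A + 4) /\ (b <= 5 -> ndigits b N <= A + 5).
Proof.
move=> b2 N0 A1 hN; split=> hb.
- exact: ndigits_le_large_base hb N0 A1 hN.
- by apply: ndigits_le_small_base N0 A1 hN; rewrite b2 hb.
Qed.
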